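(* Let $(Q,B,\mu)$ be a measure space with a non-trivial $\sigma$-finite measure $\mu$, let $0<a<b\le1$, and let $\psi:(a,b)\to(0,\infty)$ be continuous with $\inf_{p\in(a,b)}\psi(p)>0$. Then the quasi-Grand Lebesgue space $G\psi_{a,b}$ is complete with respect to the quasi-distance $\rho(x,y)=\|x-y\|_{G\psi_{a,b}}$; i.e. every Cauchy sequence for $\rho$ converges in $\rho$ to an element of $G\psi_{a,b}$.
   Context: For $p>0$, $\|f\|_p=\left(\int_Q|f|^p\,d\mu\right)^{1/p}$. $G\psi_{a,b}$ is the space of measurable $f:Q\to\mathbb R$ (modulo $\mu$-a.e. equality) with $\|f\|_{G\psi_{a,b}}:=\sup_{p\in(a,b)}\|f\|_p/\psi(p)<\infty$. *)

From mathcomp Require Import all_boot all_order all_algebra.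
From mathcomp Require Import all_classical all_reals all_analysis.
Import Order.TTheory GRing.Theory Num.Theory numFieldNormedType.Exports.
Local Open Scope classical_set_scope.
Local Open Scope ring_scope.

Definition Gnorm {d} {T : measurableType d} {R : realType}
  (mu : {measure set T -> \bar R}) (a b : R) (psi : R -> R) (f : T -> R) : \bar R :=
  ereal_sup [set (Lnorm mu p%:E (EFin \o f) * ((psi p)^-1)%:E)%E
            | p in [set p : R | a < p < b]].

(* Grand-Lebesgue Cauchy sequences are Cauchy for [fun h => \int |h|^p] at
   every p in (a, b).  At one such exponent we extract, as in the
   Riesz-Fischer theorem, a subsequence with increments so small that
   Chebyshev's inequality and Borel-Cantelli make it converge off a null set
   to a measurable f.  Fatou's lemma then transfers the Cauchy bound to
   [u n - f] at every p at once, which is convergence in G psi; and f lies in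
   G psi by the quasi-triangle inequality |y + z|^p <= 2 (|y|^p + |z|^p),
   valid because p < b <= 1. *)

From mathcomp Require Import all_boot all_order all_algebra.
From mathcomp Require Import all_classical all_reals all_analysis.
From mathcomp Require Import lra measurable_realfun.
Import Order.TTheory GRing.Theory Num.Theory numFieldNormedType.Exports.
Local Open Scope classical_set_scope.
Local Open Scope ring_scope.

Lemma powR_normD_le (R : realType) (p y z : R) : 0 < p -> p <= 1 ->
  `|y + z| `^ p <= 2 * (`|y| `^ p + `|z| `^ p).
Proof.
move=> p0 p1; wlog yz : y z / `|y| <= `|z|.
  move=> H; case: (leP `|y| `|z|) => [|/ltW] /H //.
  by rewrite addrC [X in _ * X]addrC.
have yz2 : `|y + z| <= 2 * `|z|.
  by rewrite (le_trans (ler_normD _ _))// mulr2n mulrDl mul1r lerD2r.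
apply: (le_trans (ge0_ler_powR (ltW p0) _ _ yz2)); rewrite ?nnegrE//.
rewrite powRM// ler_pM ?powR_ge0//; first by rewrite -[leRHS]powRr1// ler_powR// ler1n.
by rewrite lerDr powR_ge0.
Qed.

Lemma powR_addM_le (R : realType) (a p s Y Z : R) :
  0 < a -> a <= p -> 0 <= s -> 0 <= Y -> 0 <= Z ->
  2 * ((Y * s) `^ p + (Z * s) `^ p) <= (4 `^ a^-1 * ((Y + Z) * s)) `^ p.
Proof.
move=> a0 ap s0 Y0 Z0; have p0 := lt_le_trans a0 ap.
have le_sum W : 0 <= W -> W <= Y + Z -> (W * s) `^ p <= ((Y + Z) * s) `^ p.
  move=> W0 WYZ; apply: ge0_ler_powR; first exact: ltW.
  - by rewrite nnegrE mulr_ge0.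
  - by rewrite nnegrE mulr_ge0// addr_ge0.
  - by rewrite ler_wpM2r.
have le_four : 4 <= (4 `^ a^-1) `^ p.
  rewrite -powRrM le1r_powR ?ler1n//.
  have a_inv_ge0 : 0 <= a^-1 by rewrite invr_ge0 ltW.
  by have := ler_wpM2l a_inv_ge0 ap; rewrite mulVf ?gt_eqF.
rewrite [leRHS]powRM ?powR_ge0 ?mulr_ge0 ?addr_ge0//.
have := le_sum Y Y0 ltac:(by rewrite lerDl).
have := le_sum Z Z0 ltac:(by rewrite lerDr).
have := powR_ge0 ((Y + Z) * s) p; nra.
Qed.

Lemma cvg_powR (R : realType) (p l : R) (y : R^nat) : 0 < p ->
  (forall k, 0 <= y k) -> y @ \oo --> l -> (fun k => y k `^ p) @ \oo --> l `^ p.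
Proof.
move=> p0 y0 yl.
have l0 : 0 <= l.
  by apply: (closed_cvg [set x : R | 0 <= x] _ _ _ yl); [exact: closed_ge | exact: nearW].
have [lgt0|l_le0] := ltP 0 l.
  have powR_cont : {for l, continuous (@powR R ^~ p)}.
    apply: differentiable_continuous; apply/derivable1_diffP.
    by apply: derivable_powR; rewrite in_itv /= lgt0.
  exact: (cvg_comp _ _ yl powR_cont).
move: yl; have -> : l = 0 by apply/eqP; rewrite eq_le l_le0 l0.
rewrite powR0 ?gt_eqF// => /cvgrPdist_lt yl.
apply/cvgrPdist_lt => e e0; have e0p : 0 < e `^ p^-1 by rewrite powR_gt0.
apply: filterS (yl _ e0p) => k; rewrite !sub0r !normrN !ger0_norm ?powR_ge0// => yk.
have := gt0_ltr_powR p0 (y0 k) (ltW e0p) yk.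
by rewrite -powRrM mulVf ?gt_eqF// powRr1 ?ltW.
Qed.

Lemma cvgn_geometric_increments (R : realType) (g : R^nat) (K : nat) :
  (forall k, (K <= k)%N -> `|g k.+1 - g k| <= 2^-1 ^+ k.+1) -> cvgn g.
Proof.
move=> gK; suff /cvg_ex[l gl] : cvgn (fun n => g (n + K)%N).
  by apply/cvg_ex; exists l; rewrite -(cvg_shiftn K).
set h := fun n => g (n + K)%N.
rewrite (_ : h = cst (h 0%N) + series (telescope h)); last first.
  by apply/funext => n; rewrite [LHS]eq_sum_telescope.
apply: is_cvgD; first exact: is_cvg_cst.
have half_ge0 : 0 <= 2^-1 :> R by rewrite invr_ge0.
apply: normed_cvg; apply: (@series_le_cvg _ _ (GRing.exp 2^-1)) => [n|n|n|].
- exact: normr_ge0.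
- exact: exprn_ge0.
- rewrite /telescope /h /= addSn; apply: le_trans (gK _ (leq_addl _ _)) _.
  by apply: ler_wiXn2l => //; [rewrite invf_le1 ?ler1n | rewrite leqW // leq_addr].
- rewrite exprn_geometric; apply: is_cvg_geometric_series.
  by rewrite ger0_norm// invf_lt1 ?ltr1n.
Qed.

Definition cauchy_wrt {T : Type} {R : realType} (F : (T -> R) -> \bar R)
    (u : nat -> T -> R) :=
  forall e : R, 0 < e -> exists N, forall m n, (N <= m)%N -> (N <= n)%N ->
    (F (fun x => (u n x - u m x)%R) < e%:E)%E.

Definition cvg_wrt {T : Type} {R : realType} (F : (T -> R) -> \bar R)
    (u : nat -> T -> R) (f : T -> R) :=
  forall e : R, 0 < e -> exists N, forall n, (N <= n)%N ->
    (F (fun x => (u n x - f x)%R) < e%:E)%E.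

Section Lpow.
Context {d : measure_display} {T : measurableType d} {R : realType}
  (mu : {measure set T -> \bar R}).
Local Open Scope ereal_scope.
Implicit Types (p : R) (h : T -> R).

Definition Lpow p h := \int[mu]_x ((`|h x| `^ p)%R)%:E.

Lemma Lpow_ge0 p h : 0 <= Lpow p h.
Proof. by apply: integral_ge0 => x _; rewrite lee_fin powR_ge0. Qed.

Lemma measurable_Lpow_integrand p {h} : measurable_fun setT h ->
  measurable_fun setT (fun x => ((`|h x| `^ p)%R)%:E).
Proof.
move=> mh; apply/measurable_EFinP; apply: (measurableT_comp (measurable_powR p)).
exact: measurableT_comp.
Qed.

Lemma Lnorm_EFin_leE p h K : (0 < p)%R -> (0 <= K)%R ->
  (Lnorm mu p%:E (EFin \o h) <= K%:E) = (Lpow p h <= ((K `^ p)%R)%:E).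
Proof.
move=> p0 K0; have LpowE : Lpow p h = Lnorm mu p%:E (EFin \o h) `^ p.
  by rewrite poweR_Lnorm ?gt_eqF.
apply/idP/idP => hK.
  rewrite LpowE -poweR_EFin; apply: gt0_ler_poweR => //; first exact: ltW.
    by rewrite in_itv /= Lnorm_ge0 leey.
  by rewrite in_itv /= lee_fin K0 leey.
have -> : Lnorm mu p%:E (EFin \o h) = Lpow p h `^ p^-1.
  by rewrite LpowE -poweRrM mulfV ?gt_eqF// poweRe1// Lnorm_ge0.
apply: le_trans (gt0_ler_poweR _ _ _ hK) _.
- by rewrite invr_ge0 ltW.
- by rewrite in_itv /= Lpow_ge0 leey.
- by rewrite in_itv /= lee_fin powR_ge0 leey.
by rewrite poweR_EFin -powRrM mulfV ?gt_eqF// powRr1.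
Qed.

Lemma Lpow_ge_measure {p h} {t : R} : (0 < p)%R -> (0 < t)%R -> measurable_fun setT h ->
  ((t `^ p)%R)%:E * mu [set x | (t <= `|h x|)%R] <= Lpow p h.
Proof.
move=> p0 t0 mh.
have poweR_nd : {in `[0, +oo[%classic &, {homo poweR ^~ p : x y / x <= y}}.
  move=> x y; rewrite !inE /= !in_itv /= !andbT => x0 y0.
  by apply: gt0_ler_poweR; rewrite ?in_itv /= ?leey ?x0 ?y0// ltW.
have mEh : measurable_fun setT (EFin \o h) by apply/measurable_EFinP.
have := le_integral_comp_abse mu measurableT (measurable_poweR p)
  (fun r _ => poweR_ge0 r p) poweR_nd mEh t0.
by rewrite setTI.
Qed.

Lemma Lpow_subr_le {p} {y z : T -> R} : (0 < p)%R -> (p <= 1)%R ->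
  measurable_fun setT y -> measurable_fun setT z ->
  Lpow p (fun x => (y x - z x)%R) <= 2%:E * (Lpow p y + Lpow p z).
Proof.
move=> p0 p1 my mz.
have pow_ge0 (v : T -> R) x : 0 <= ((`|v x| `^ p)%R)%:E by rewrite lee_fin powR_ge0.
have mY := measurable_Lpow_integrand p my.
have mZ := measurable_Lpow_integrand p mz.
rewrite /Lpow -ge0_integralD// -ge0_integralZl_EFin//; last 2 first.
- by move=> x _; rewrite adde_ge0.
- exact: emeasurable_funD.
apply: ge0_le_integral => //.
- by apply: measurable_Lpow_integrand; exact: measurable_funB.
- by apply: emeasurable_funM => //; exact: emeasurable_funD.
- move=> x _; rewrite -EFinD -EFinM lee_fin.
  by have := @powR_normD_le R p (y x) (- z x)%R p0 p1; rewrite normrN.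
Qed.

(* With t k = 2^-(k+1), Chebyshev turns the bound into
   mu [set x | t k <= |g k.+1 x - g k x|] <= t k, a summable sequence,
   so by Borel-Cantelli almost every x has |g k.+1 x - g k x| < t k eventually. *)
Lemma Lpow_fast_cauchy_cvg_off_null {p} {g : nat -> T -> R} : (0 < p)%R ->
  (forall k, measurable_fun setT (g k)) ->
  (forall k, Lpow p (fun x => (g k.+1 x - g k x)%R) <=
     ((((2^-1) ^+ k.+1) `^ p * (2^-1) ^+ k.+1)%R)%:E) ->
  exists2 N, measurable N /\ mu N = 0 & forall x, ~ N x -> cvgn (g ^~ x).
Proof.
move=> p0 mg g_fast; pose t k : R := ((2^-1) ^+ k.+1)%R.
have t_gt0 k : (0 < t k)%R by rewrite exprn_gt0// invr_gt0.
pose E k := [set x | (t k <= `|g k.+1 x - g k x|)%R].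
have mE k : measurable (E k).
  have := measurableT_comp (@normr_measurable R setT) (measurable_funB (mg k.+1) (mg k)).
  move=> /(_ measurableT _ (@measurable_itv _ `[t k, +oo[)); rewrite setTI.
  by congr measurable; apply/seteqP; split => x /=; rewrite in_itv /= andbT.
have muE k : mu (E k) <= (t k)%:E.
  have := Lpow_ge_measure p0 (t_gt0 k) (measurable_funB (mg k.+1) (mg k)).
  move=> /le_trans /(_ (g_fast k)).
  by rewrite EFinM lee_pmul2l// lte_fin powR_gt0.
have sum_muE : \sum_(0 <= k <oo) mu (E k) < +oo.
  apply: (@le_lt_trans _ _ (\sum_(0 <= k <oo | xpredT k) (1 / (2 ^ k.+1)%:R)%:E)).
    apply: lee_nneseries => [k _ _|k _]; first exact: measure_ge0.
    by rewrite (le_trans (muE k))// lee_fin /t natrX div1r -exprVn.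
  exact: le_lt_trans (epsilon_trick0 xpredT ler01) (ltry 1).
exists (lim_sup_set E).
  split; last exact: lim_sup_set_cvg0.
  by apply: bigcap_measurable => // n _; apply: bigcup_measurable => k _.
move=> x Ex; have [K notE] : exists K, forall k, (K <= k)%N -> ~ E k x.
  apply: contrapT => nK; apply: Ex => n _; apply: contrapT => nE.
  by apply: nK; exists n => k nk Ekx; apply: nE; exists k.
apply: (@cvgn_geometric_increments _ _ K) => k /notE /negP.
by rewrite -ltNge => /ltW.
Qed.

Lemma cvg_off_null_measurable_lim {g : nat -> T -> R} {N : set T} :
  (forall k, measurable_fun setT (g k)) -> measurable N ->
  (forall x, ~ N x -> cvgn (g ^~ x)) ->
  exists2 f : T -> R, measurable_fun setT f & forall x, ~ N x -> g ^~ x @ \oo --> f x.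
Proof.
move=> mg mN g_cvg.
(* Killing g on N makes it converge everywhere, so its limit is measurable. *)
pose h k x := (\1_(~` N) x * g k x)%R.
have hg x : ~ N x -> h ^~ x = g ^~ x.
  by move=> Nx; apply/funext => k; rewrite /h indicE mem_set ?mul1r.
have h_cvg x : cvgn (h ^~ x).
  have [Nx|Nx] := pselect (N x); last by rewrite hg//; exact: g_cvg.
  rewrite (_ : h ^~ x = cst 0%R); first exact: is_cvg_cst.
  by apply/funext => k; rewrite /h indicE memNset ?mul0r.
exists (fun x => limn (h ^~ x)); last by move=> x Nx; rewrite -hg//; exact: h_cvg.
apply: (measurable_fun_cvg (h := h)) => [k|x _]; last exact: h_cvg.
by apply: measurable_funM => //; exact: measurable_indic (measurableC mN).
Qed.

Lemma Lpow_le_cvg_off_null {p} {h : nat -> T -> R} {f : T -> R} {N : set T} {C} :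
  (0 < p)%R -> measurable N -> mu N = 0 ->
  (forall k, measurable_fun setT (h k)) -> measurable_fun setT f ->
  (forall x, ~ N x -> h ^~ x @ \oo --> f x) ->
  (\forall k \near \oo, Lpow p (h k) <= C) -> Lpow p f <= C.
Proof.
move=> p0 mN N0 mh mf hf hC.
have LpowE v : measurable_fun setT v -> Lpow p v = \int[mu]_(x in ~` N) ((`|v x| `^ p)%R)%:E.
  move=> mv; rewrite /Lpow (ge0_negligible_integral mN measurableT) ?setTD//.
  exact: measurable_Lpow_integrand.
rewrite LpowE//; under eq_integral => x.
  rewrite inE => Nx.
  have powcvg : (fun k => ((`|h k x| `^ p)%R)%:E) @ \oo --> ((`|f x| `^ p)%R)%:E.
    apply: cvg_EFin; first exact: nearW.
    by apply: cvg_powR => //; apply: cvg_norm; exact: hf.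
  rewrite -(cvg_lim _ powcvg)// -is_cvg_limn_einfE; last exact: cvgP powcvg.
  over.
apply: le_trans (fatou _ (measurableC mN) _ _) _ => /=.
- by move=> k; apply: measurable_funTS; exact: measurable_Lpow_integrand.
- by move=> k x _; rewrite lee_fin powR_ge0.
under eq_fun => k do rewrite -LpowE//.
rewrite limn_einf_lim; apply: lime_le; first exact: is_cvg_einfs.
by apply: filterS hC => k hk; apply: le_trans hk; apply: ereal_inf_lbound; exists k => /=.
Qed.

Lemma Lpow_cauchy_subseq_cvg_off_null {p} {u : nat -> T -> R} : (0 < p)%R ->
  (forall n, measurable_fun setT (u n)) ->
  cauchy_wrt (Lpow p) u ->
  exists (phi : nat -> nat) (f : T -> R) (N : set T),
    [/\ forall k, (k <= phi k)%N, measurable_fun setT f, measurable N, mu N = 0 &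
        forall x, ~ N x -> (fun k => u (phi k) x) @ \oo --> f x].
Proof.
move=> p0 u_meas u_cauchy.
pose eps k : R := (((2^-1) ^+ k.+1) `^ p * (2^-1) ^+ k.+1)%R.
have eps_gt0 k : (0 < eps k)%R by rewrite mulr_gt0 ?powR_gt0 ?exprn_gt0 ?invr_gt0.
have [Nf Nf_cauchy] := choice (fun k => u_cauchy _ (eps_gt0 k)).
pose phi k := (k + \sum_(i < k.+1) Nf i)%N.
have Nf_le_phi k : (Nf k <= phi k)%N by rewrite /phi big_ord_recr /= addnA leq_addl.
have phi_nd k : (phi k <= phi k.+1)%N.
  by rewrite /phi (big_ord_recr k.+1) /= leq_add// leq_addr.
have u_phi_fast k : Lpow p (fun x => (u (phi k.+1) x - u (phi k) x)%R) <= (eps k)%:E.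
  by apply/ltW/Nf_cauchy; [exact: Nf_le_phi | exact: leq_trans (Nf_le_phi k) (phi_nd k)].
have [N [mN N0] cvgN] := Lpow_fast_cauchy_cvg_off_null p0 (fun k => u_meas (phi k)) u_phi_fast.
have [f mf cvgf] := cvg_off_null_measurable_lim (fun k => u_meas (phi k)) mN cvgN.
by exists phi, f, N; split => // k; rewrite leq_addr.
Qed.

End Lpow.

Section Gnorm.
Context {d : measure_display} {T : measurableType d} {R : realType}
  (mu : {measure set T -> \bar R}).
Context {a b : R} {psi : R -> R}.
Hypothesis a_gt0 : (0 < a)%R.
Hypothesis psi_gt0 : forall p, (a < p < b)%R -> (0 < psi p)%R.
Local Open Scope ereal_scope.

Let p_gt0 {p} : (a < p < b)%R -> (0 < p)%R.
Proof. by case/andP => /(lt_trans a_gt0). Qed.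

Lemma Gnorm_leP {h : T -> R} {x : R} : (0 <= x)%R ->
  Gnorm mu a b psi h <= x%:E <->
  forall p, (a < p < b)%R -> Lpow mu p h <= (((x * psi p) `^ p)%R)%:E.
Proof.
move=> x0; have Lnorm_psi_le p : (a < p < b)%R ->
    (Lnorm mu p%:E (EFin \o h) * (psi p)^-1%:E <= x%:E) =
    (Lpow mu p h <= (((x * psi p) `^ p)%R)%:E).
  move=> hp; have xpsi_ge0 : (0 <= x * psi p)%R by rewrite mulr_ge0// ltW// psi_gt0.
  by rewrite lee_pdivrMr ?psi_gt0// -EFinM Lnorm_EFin_leE ?p_gt0.
split => [Gx p hp | Lx].
  by rewrite -Lnorm_psi_le//; apply: le_trans Gx; apply: ereal_sup_ubound; exists p.
by apply: ge_ereal_sup => _ [p hp <-]; rewrite Lnorm_psi_le// Lx.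
Qed.

Lemma Gnorm_cauchy_Lpow_cauchy {u : nat -> T -> R} {p : R} : (a < p < b)%R ->
  cauchy_wrt (Gnorm mu a b psi) u -> cauchy_wrt (Lpow mu p) u.
Proof.
move=> hp u_cauchy e e0; pose e' := ((e / 2) `^ p^-1 / psi p)%R.
have e'_gt0 : (0 < e')%R by rewrite divr_gt0 ?powR_gt0 ?divr_gt0 ?psi_gt0.
have [N hN] := u_cauchy _ e'_gt0; exists N => m n Nm Nn.
move: (hN m n Nm Nn) => /ltW /(Gnorm_leP (ltW e'_gt0)) /(_ p hp) /le_lt_trans; apply.
rewrite divfK ?gt_eqF ?psi_gt0// -powRrM mulVf ?gt_eqF ?p_gt0// powRr1 ?divr_ge0 ?ltW//.
by rewrite lte_fin ltr_pdivrMr// ltr_pMr// ltr1n.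
Qed.

Lemma Gnorm_cauchy_subseq_cvg {u : nat -> T -> R} {f : T -> R}
    {phi : nat -> nat} {N : set T} :
  (forall n, measurable_fun setT (u n)) -> measurable_fun setT f ->
  cauchy_wrt (Gnorm mu a b psi) u -> (forall k, (k <= phi k)%N) ->
  measurable N -> mu N = 0 -> (forall x, ~ N x -> (fun k => u (phi k) x) @ \oo --> f x) ->
  cvg_wrt (Gnorm mu a b psi) u f.
Proof.
move=> u_meas mf u_cauchy phi_ge mN N0 u_phi_cvg e e0.
have e2_gt0 : (0 < e / 2)%R by rewrite divr_gt0.
have [M hM] := u_cauchy _ e2_gt0; exists M => n Mn.
apply: (@le_lt_trans _ _ (e / 2)%:E); last by rewrite lte_fin ltr_pdivrMr// ltr_pMr// ltr1n.
apply/(Gnorm_leP (ltW e2_gt0)) => p hp.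
apply: (Lpow_le_cvg_off_null mu (h := fun k x => (u n x - u (phi k) x)%R) (p_gt0 hp) mN N0).
- by move=> k; apply: measurable_funB.
- exact: measurable_funB.
- by move=> x Nx; apply: cvgB; [exact: cvg_cst | exact: u_phi_cvg].
- near=> k; move: (hM (phi k) n) => /(_ _ Mn) /ltW /(Gnorm_leP (ltW e2_gt0)); apply => //.
  by apply: leq_trans (phi_ge k); near: k; exists M.
Unshelve. all: by end_near.
Qed.

Hypothesis b_le1 : (b <= 1)%R.

Lemma Gnorm_subr_le {y z : T -> R} {Y Z : R} :
  measurable_fun setT y -> measurable_fun setT z -> (0 <= Y)%R -> (0 <= Z)%R ->
  Gnorm mu a b psi y <= Y%:E -> Gnorm mu a b psi z <= Z%:E ->
  Gnorm mu a b psi (fun x => (y x - z x)%R) <= (4 `^ a^-1 * (Y + Z))%:E.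
Proof.
move=> my mz Y0 Z0 /(Gnorm_leP Y0) yY /(Gnorm_leP Z0) zZ.
apply/Gnorm_leP; first by rewrite mulr_ge0 ?powR_ge0 ?addr_ge0.
move=> p hp; have /andP[ap pb] := hp.
apply: le_trans (Lpow_subr_le mu (p_gt0 hp) (ltW (lt_le_trans pb b_le1)) my mz) _.
apply: le_trans (lee_wpmul2l _ (leeD (yY p hp) (zZ p hp))) _ => //.
rewrite -EFinD -EFinM lee_fin -mulrA.
by apply: powR_addM_le => //; [exact: ltW | exact: ltW (psi_gt0 _ hp)].
Qed.

Lemma Gnorm_subr_lty {y z : T -> R} :
  measurable_fun setT y -> measurable_fun setT z ->
  Gnorm mu a b psi y < +oo -> Gnorm mu a b psi z < +oo ->
  Gnorm mu a b psi (fun x => (y x - z x)%R) < +oo.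
Proof.
have real_ub (x : \bar R) : x < +oo -> exists2 r : R, (0 <= r)%R & x <= r%:E.
  case: x => [r _| // | _]; last by exists 0%R; rewrite ?leNye.
  by exists (Num.max r 0)%R; rewrite ?lee_fin le_max lexx ?orbT.
move=> my mz /real_ub[Y Y0 yY] /real_ub[Z Z0 zZ].
exact: le_lt_trans (Gnorm_subr_le my mz Y0 Z0 yY zZ) (ltry _).
Qed.

End Gnorm.

Theorem theorem4p2 (d : measure_display) (T : measurableType d) (R : realType)
  (mu : {measure set T -> \bar R})
  (hsigma : sigma_finite [set: T] mu)
  (hnontriv : (0 < mu [set: T])%E)
  (a b : R) (ha : 0 < a) (hab : a < b) (hb1 : b <= 1)
  (psi : R -> R)
  (hcont : forall p, a < p < b -> {for p, continuous psi})
  (hpos : forall p, a < p < b -> 0 < psi p)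
  (hinf : exists c : R, 0 < c /\ forall p, a < p < b -> c <= psi p)
  (u : nat -> T -> R)
  (hu_meas : forall n, measurable_fun [set: T] (u n))
  (hu_fin : forall n, (Gnorm mu a b psi (u n) < +oo)%E)
  (hcauchy : forall e : R, 0 < e -> exists N : nat, forall m n : nat,
      (N <= m)%N -> (N <= n)%N -> (Gnorm mu a b psi (fun x => (u n x - u m x)%R) < e%:E)%E) :
  exists f : T -> R,
    [/\ measurable_fun [set: T] f,
        (Gnorm mu a b psi f < +oo)%E &
        forall e : R, 0 < e -> exists N : nat, forall n : nat,
          (N <= n)%N -> (Gnorm mu a b psi (fun x => (u n x - f x)%R) < e%:E)%E].
Proof.
have hp0 : a < (a + b) / 2 < b by apply/andP; split; lra.
have [phi [f [N [phi_ge mf mN N0 u_phi_cvg]]]] := Lpow_cauchy_subseq_cvg_off_null mu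
  (lt_trans ha (andP hp0).1) hu_meas (Gnorm_cauchy_Lpow_cauchy mu ha hpos hp0 hcauchy).
have u_cvg := Gnorm_cauchy_subseq_cvg mu ha hpos hu_meas mf hcauchy phi_ge mN N0 u_phi_cvg.
exists f; split => //.
have [M uM_f] := u_cvg 1 ltr01.
rewrite (_ : f = fun x => u M x - (u M x - f x)); last by apply/funext => x; rewrite subKr.
apply: (Gnorm_subr_lty mu ha hpos hb1 (hu_meas M) _ (hu_fin M)).
  exact: measurable_funB.
exact: lt_trans (uM_f M (leqnn M)) (ltry 1).
Qed.
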